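(* Let $n,d,d_k$ be positive integers, $X\in\mathbb{R}^{n\times d}$, $W_Q,W_K\in\mathbb{R}^{d\times d_k}$, $E\in\mathbb{R}^{n\times n}$, and let $P\in\mathbb{R}^{d\times d}$ be an orthogonal projector. Put $B=W_QW_K^\top$, $X_P=XP$, $G_Q=X^\top E X W_K/\sqrt{d_k}$, $G_K=X^\top E^\top X W_Q/\sqrt{d_k}$, and for $\eta_Q,\eta_K\ge0$ let $B^+=(W_Q-\eta_QG_Q)(W_K-\eta_KG_K)^\top$ and $\Delta Z_P=X_P P(B^+-B)P X_P^\top/\sqrt{d_k}$. Suppose there are constants $\lambda_Q,\lambda_K\ge0$ such that $$\|XW_SW_S^\top P\|_F\le\lambda_S\|X_P\|_F\|W_S\|_{\mathrm{op}}^2,\qquad S\in\{Q,K\}.$$ Then $$\|\Delta Z_P\|_F\le\frac{\|X_P\|_{\mathrm{op}}^2\|X_P\|_F^2\|E\|_{\mathrm{op}}}{d_k}\Big(\eta_Q\lambda_K\|W_K\|_{\mathrm{op}}^2+\eta_K\lambda_Q\|W_Q\|_{\mathrm{op}}^2\Big)+R_2,$$ where $R_2=\eta_Q\eta_K\|X_P\|_{\mathrm{op}}^2\|X_P\|_F^2\|E\|_{\mathrm{op}}^2\|XW_K\|_F\|XW_Q\|_F/d_k^{3/2}$. In particular (using $\|X_P\|_{\mathrm{op}}\le\|X_P\|_F$), the first-order part of $\|\Delta Z_P\|_F$ is at most $\frac{\|X_P\|_F^4\|E\|_{\mathrm{op}}}{d_k}\big(\eta_Q\lambda_K\|W_K\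|_{\mathrm{op}}^2+\eta_K\lambda_Q\|W_Q\|_{\mathrm{op}}^2\big)$.
   Context: $\|\cdot\|_F$ is the Frobenius norm, $\|\cdot\|_{\mathrm{op}}$ the spectral norm; an orthogonal projector satisfies $P=P^\top=P^2$. *)

From HB Require Import structures.
From mathcomp Require Import all_boot all_order all_algebra.
From mathcomp Require Import all_classical all_reals.
Set Implicit Arguments. Unset Strict Implicit. Unset Printing Implicit Defensive.
Import Order.TTheory GRing.Theory Num.Theory.
Local Open Scope ring_scope.
Local Open Scope classical_set_scope.

Definition frob {R : realType} {m n : nat} (A : 'M[R]_(m, n)) : R :=
  Num.sqrt (\sum_(i < m) \sum_(j < n) A i j ^+ 2).

Definition opnorm {R : realType} {m n : nat} (A : 'M[R]_(m, n)) : R :=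
  sup [set frob (A *m v) | v in [set v : 'cV[R]_n | frob v = 1]].

Definition orth_proj {R : realType} {d : nat} (P : 'M[R]_d) : Prop :=
  P^T = P /\ P *m P = P.

(* Because P is an orthogonal projector, X_P P M P X_P^T = X_P M X_P^T, and
   expanding B^+ - B splits Delta Z_P into two first-order terms and one
   second-order term. Each is bounded by chaining |AB|_F <= |A|_op |B|_F and
   |AB|_F <= |A|_F |B|_F, after regrouping with P = P^T = P^2 so that the
   factor X W_S W_S^T P of the hypothesis appears:
     X_P X^T E X W_K W_K^T X_P^T = X_P X_P^T E (X W_K W_K^T P) X_P^T.
   The W_Q term is the transpose of the W_K term with E^T in place of E, and
   |E^T|_op = |E|_op. *)

From HB Require Import structures.
From mathcomp Require Import all_boot all_order all_algebra.
From mathcomp Require Import all_classical all_reals.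
From mathcomp Require Import ring lra.
Set Implicit Arguments.
Unset Strict Implicit.
Unset Printing Implicit Defensive.

Import Order.TTheory GRing.Theory Num.Theory.
Local Open Scope ring_scope.

Section FrobeniusNorm.
Variable R : realType.
Implicit Types m n p : nat.

Lemma sum_CauchySchwarz (I : finType) (a b : I -> R) :
  (\sum_i a i * b i) ^+ 2 <= (\sum_i a i ^+ 2) * (\sum_i b i ^+ 2).
Proof.
set Sab := \sum_i a i * b i; set Saa := \sum_i a i ^+ 2; set Sbb := \sum_i b i ^+ 2.
have double_sum (F G : I -> R) :
    \sum_i \sum_j F i * G j = (\sum_i F i) * (\sum_j G j).
  by rewrite mulr_suml; apply: eq_bigr => i _; rewrite mulr_sumr.
have lagrange : \sum_i \sum_j (a i * b j - a j * b i) ^+ 2 = 2 * (Saa * Sbb - Sab ^+ 2).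
  transitivity (\sum_i \sum_j (a i ^+ 2 * b j ^+ 2) + \sum_i \sum_j (b i ^+ 2 * a j ^+ 2)
                - 2 * \sum_i \sum_j (a i * b i) * (a j * b j)).
    rewrite mulr_sumr -sumrN -!big_split; apply: eq_bigr => i _ /=.
    rewrite mulr_sumr -sumrN -!big_split; apply: eq_bigr => j _ /=; ring.
  by rewrite !double_sum -/Saa -/Sbb -/Sab; ring.
have : 0 <= \sum_i \sum_j (a i * b j - a j * b i) ^+ 2.
  by apply: sumr_ge0 => i _; apply: sumr_ge0 => j _; exact: sqr_ge0.
by rewrite lagrange pmulr_rge0 // subr_ge0.
Qed.

Lemma frob_ge0 m n (A : 'M[R]_(m, n)) : 0 <= frob A.
Proof. exact: sqrtr_ge0. Qed.

Lemma frob_sqr m n (A : 'M[R]_(m, n)) : frob A ^+ 2 = \sum_i \sum_j A i j ^+ 2.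
Proof.
rewrite sqr_sqrtr //.
by apply: sumr_ge0 => i _; apply: sumr_ge0 => j _; exact: sqr_ge0.
Qed.

Lemma frob_le_sqr m n (A : 'M[R]_(m, n)) c :
  0 <= c -> frob A ^+ 2 <= c ^+ 2 -> frob A <= c.
Proof. by move=> c_ge0; rewrite ler_pXn2r // nnegrE frob_ge0. Qed.

Lemma frobZ m n (k : R) (A : 'M[R]_(m, n)) : frob (k *: A) = `|k| * frob A.
Proof.
rewrite /frob -sqrtr_sqr -sqrtrM ?sqr_ge0 // mulr_sumr; congr Num.sqrt.
by apply: eq_bigr => i _; rewrite mulr_sumr; apply: eq_bigr => j _; rewrite mxE exprMn.
Qed.

Lemma frobN m n (A : 'M[R]_(m, n)) : frob (- A) = frob A.
Proof. by rewrite -scaleN1r frobZ normrN normr1 mul1r. Qed.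

Lemma frob_trmx m n (A : 'M[R]_(m, n)) : frob A^T = frob A.
Proof.
rewrite /frob exchange_big; congr Num.sqrt.
by apply: eq_bigr => i _; apply: eq_bigr => j _; rewrite mxE.
Qed.

Lemma frob_col_sqr m n (A : 'M[R]_(m, n)) :
  frob A ^+ 2 = \sum_j frob (col j A) ^+ 2.
Proof.
rewrite frob_sqr exchange_big; apply: eq_bigr => j _.
by rewrite frob_sqr; apply: eq_bigr => i _; rewrite big_ord1 mxE.
Qed.

Lemma ler_frobD m n (A B : 'M[R]_(m, n)) : frob (A + B) <= frob A + frob B.
Proof.
apply: frob_le_sqr; first by rewrite addr_ge0 ?frob_ge0.
have dot_le : \sum_i \sum_j A i j * B i j <= frob A * frob B.
  apply: le_trans (ler_norm _) _.
  rewrite -ler_sqr ?nnegrE ?mulr_ge0 ?frob_ge0 // real_normK ?num_real //.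
  by rewrite exprMn !frob_sqr !pair_bigA; exact: sum_CauchySchwarz.
have -> : frob (A + B) ^+ 2
    = frob A ^+ 2 + 2 * (\sum_i \sum_j A i j * B i j) + frob B ^+ 2.
  rewrite !frob_sqr mulr_sumr -!big_split; apply: eq_bigr => i _ /=.
  rewrite mulr_sumr -!big_split; apply: eq_bigr => j _ /=; rewrite mxE; ring.
rewrite sqrrD -mulr_natl; lra.
Qed.

Lemma ler_frobB m n (A B : 'M[R]_(m, n)) : frob (A - B) <= frob A + frob B.
Proof. by rewrite -(frobN B); exact: ler_frobD. Qed.

Lemma ler_frobM m n p (A : 'M[R]_(m, n)) (B : 'M[R]_(n, p)) :
  frob (A *m B) <= frob A * frob B.
Proof.
apply: frob_le_sqr; first by rewrite mulr_ge0 ?frob_ge0.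
rewrite exprMn !frob_sqr.
have -> : (\sum_i \sum_j A i j ^+ 2) * (\sum_i \sum_j B i j ^+ 2)
    = \sum_i \sum_j (\sum_l A i l ^+ 2) * (\sum_l B l j ^+ 2).
  rewrite mulr_suml; apply: eq_bigr => i _.
  by rewrite exchange_big mulr_sumr.
apply: ler_sum => i _; apply: ler_sum => j _; rewrite mxE; exact: sum_CauchySchwarz.
Qed.

Lemma frob_mulmx_le m n p (A : 'M[R]_(m, n)) (B : 'M[R]_(n, p)) (c : R) :
  frob B <= c -> frob (A *m B) <= frob A * c.
Proof. by move=> B_le; apply: le_trans (ler_frobM A B) (ler_wpM2l (frob_ge0 A) B_le). Qed.

Lemma frob_mulmx_le_cols m n p (A : 'M[R]_(m, n)) (B : 'M[R]_(n, p)) (c : R) :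
  0 <= c -> (forall v : 'cV[R]_n, frob (A *m v) <= c * frob v) ->
  frob (A *m B) <= c * frob B.
Proof.
move=> c_ge0 Av_le; apply: frob_le_sqr; first by rewrite mulr_ge0 ?frob_ge0.
rewrite exprMn !frob_col_sqr mulr_sumr; apply: ler_sum => j _.
rewrite -exprMn colE -mulmxA -colE.
by apply: lerXn2r; rewrite ?nnegrE ?mulr_ge0 ?frob_ge0.
Qed.

End FrobeniusNorm.

Section OperatorNorm.
Variable R : realType.
Implicit Types m n p : nat.
Local Open Scope classical_set_scope.

Lemma opnorm_ge_unit m n (A : 'M[R]_(m, n)) (v : 'cV[R]_n) :
  frob v = 1 -> frob (A *m v) <= opnorm A.
Proof.
move=> v1.
have bounded : has_ubound [set frob (A *m w) | w in [set w : 'cV[R]_n | frob w = 1]].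
  exists (frob A) => _ [w /= w1 <-].
  by apply: le_trans (ler_frobM A w) _; rewrite w1 mulr1.
by apply: (ub_le_sup bounded); exists v.
Qed.

Lemma opnorm_ge0 m n (A : 'M[R]_(m, n)) : 0 <= opnorm A.
Proof.
rewrite /opnorm; set S := [set _ | _ in _].
have [[_ [v v1 _]]|S0] := pselect (S !=set0).
  exact: le_trans (frob_ge0 _) (opnorm_ge_unit A v1).
by rewrite sup_out //; case.
Qed.

Lemma opnorm_le m n (A : 'M[R]_(m, n)) (c : R) : 0 <= c ->
  (forall v : 'cV[R]_n, frob v = 1 -> frob (A *m v) <= c) -> opnorm A <= c.
Proof.
move=> c_ge0 unit_le; rewrite /opnorm; set S := [set _ | _ in _].
have [S_ne|S0] := pselect (S !=set0).
  by apply: ge_sup => // _ [v v1 <-]; exact: unit_le.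
by rewrite sup_out //; case.
Qed.

Lemma frob_mulmxv_le m n (A : 'M[R]_(m, n)) (v : 'cV[R]_n) :
  frob (A *m v) <= opnorm A * frob v.
Proof.
have [v0|v_neq0] := eqVneq (frob v) 0.
  by apply: le_trans (ler_frobM A v) _; rewrite v0 !mulr0.
have v_gt0 : 0 < frob v by rewrite lt_def v_neq0 frob_ge0.
have u1 : frob ((frob v)^-1 *: v) = 1.
  by rewrite frobZ ger0_norm ?invr_ge0 ?frob_ge0 // mulVf.
have := opnorm_ge_unit A u1.
rewrite -scalemxAr frobZ ger0_norm ?invr_ge0 ?frob_ge0 //.
by rewrite mulrC ler_pdivrMr.
Qed.

Lemma frob_mulmx_opl_le m n p (A : 'M[R]_(m, n)) (B : 'M[R]_(n, p)) (c : R) :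
  frob B <= c -> frob (A *m B) <= opnorm A * c.
Proof.
move=> B_le; apply: le_trans (ler_wpM2l (opnorm_ge0 A) B_le).
exact: frob_mulmx_le_cols (opnorm_ge0 A) (frob_mulmxv_le A).
Qed.

Lemma opnorm_le_frob m n (A : 'M[R]_(m, n)) : opnorm A <= frob A.
Proof.
apply: opnorm_le (frob_ge0 A) _ => v v1.
by apply: le_trans (ler_frobM A v) _; rewrite v1 mulr1.
Qed.

Lemma frob_trmx_mulmx_cV n (w : 'cV[R]_n) : frob (w^T *m w) = frob w ^+ 2.
Proof.
rewrite frob_sqr /frob !big_ord1 sqrtr_sqr mxE ger0_norm.
  by apply: eq_bigr => i _; rewrite big_ord1 !mxE expr2.
by apply: sumr_ge0 => i _; rewrite !mxE -expr2 sqr_ge0.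
Qed.

Lemma frob_trmx_mulmxv_le m n (A : 'M[R]_(m, n)) (v : 'cV[R]_m) :
  frob (A^T *m v) <= opnorm A * frob v.
Proof.
set w := A^T *m v.
have [w0|w_neq0] := eqVneq (frob w) 0.
  by rewrite w0 mulr_ge0 ?opnorm_ge0 ?frob_ge0.
have w_gt0 : 0 < frob w by rewrite lt_def w_neq0 frob_ge0.
(* |w|^2 = <v, A w> <= |v| |A| |w|, then cancel |w|. *)
have : frob w ^+ 2 <= frob v * (opnorm A * frob w).
  have -> : frob w ^+ 2 = frob (v^T *m (A *m w)).
    by rewrite -frob_trmx_mulmx_cV /w trmx_mul trmxK !mulmxA.
  apply: le_trans (ler_frobM _ _) _; rewrite frob_trmx.
  exact/ler_wpM2l/frob_mulmxv_le/frob_ge0.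
by rewrite expr2 mulrA [frob v * _]mulrC ler_pM2r.
Qed.

Lemma opnorm_trmx m n (A : 'M[R]_(m, n)) : opnorm A^T = opnorm A.
Proof.
have opnorm_trmx_le m' n' (B : 'M[R]_(m', n')) : opnorm B^T <= opnorm B.
  apply: opnorm_le (opnorm_ge0 B) _ => v v1.
  by have := frob_trmx_mulmxv_le B v; rewrite v1 mulr1.
by apply/le_anti; rewrite opnorm_trmx_le /=; have := opnorm_trmx_le _ _ A^T; rewrite trmxK.
Qed.

End OperatorNorm.

Lemma mulmx_trmx_perturb (R : comPzRingType) d k (a b : R) (A B G H : 'M[R]_(d, k)) :
  (A - a *: G) *m (B - b *: H)^T - A *m B^T
  = (a * b) *: (G *m H^T) - a *: (G *m B^T) - b *: (A *m H^T).
Proof.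
rewrite [(B - _)^T]linearB [X in B^T - X]linearZ /= mulmxBr !mulmxBl.
rewrite -!scalemxAl -!scalemxAr scalerA.
move: (A *m B^T) (A *m H^T) (G *m B^T) (G *m H^T) => AB AH GB GH.
by apply/matrixP => i j; rewrite !mxE; ring.
Qed.

Section ProjectedAttentionUpdate.
Variables (R : realType) (n d : nat) (X : 'M[R]_(n, d)) (P : 'M[R]_d).
Hypothesis P_proj : orth_proj P.
Local Notation XP := (X *m P).

Lemma mulmx_proj_idem m (A : 'M[R]_(m, d)) : A *m P *m P = A *m P.
Proof. by case: P_proj => _ PP; rewrite -mulmxA PP. Qed.

Lemma proj_sandwich (M : 'M[R]_d) : XP *m P *m M *m P *m XP^T = XP *m M *m XP^T.
Proof.
case: P_proj => Pt _.
by rewrite !trmx_mul Pt !mulmxA !mulmx_proj_idem.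
Qed.

Lemma frob_first_order_le (E : 'M[R]_n) k (W : 'M[R]_(d, k)) :
  frob (XP *m (X^T *m E *m X *m W *m W^T) *m XP^T)
  <= opnorm XP ^+ 2 * opnorm E * frob (X *m W *m W^T *m P) * frob XP.
Proof.
case: P_proj => Pt _.
set K := X *m W *m W^T *m P.
have -> : XP *m (X^T *m E *m X *m W *m W^T) *m XP^T
          = XP *m (XP^T *m (E *m (K *m XP^T))).
  by rewrite !trmx_mul Pt !mulmxA !mulmx_proj_idem.
rewrite expr2 -!mulrA; apply: frob_mulmx_opl_le.
rewrite -(opnorm_trmx XP); apply: frob_mulmx_opl_le.
by apply: frob_mulmx_opl_le; rewrite -(frob_trmx XP) ler_frobM.
Qed.

Lemma frob_first_order_trmx_le (E : 'M[R]_n) k (W : 'M[R]_(d, k)) :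
  frob (XP *m (W *m (X^T *m E^T *m X *m W)^T) *m XP^T)
  <= opnorm XP ^+ 2 * opnorm E * frob (X *m W *m W^T *m P) * frob XP.
Proof.
have := frob_first_order_le E^T W; rewrite opnorm_trmx -frob_trmx.
by rewrite !trmx_mul !trmxK !mulmxA.
Qed.

Lemma frob_second_order_le (E : 'M[R]_n) k (W V : 'M[R]_(d, k)) :
  frob (XP *m ((X^T *m E *m X *m W) *m (X^T *m E^T *m X *m V)^T) *m XP^T)
  <= opnorm XP ^+ 2 * opnorm E ^+ 2 * frob (X *m W) * frob (X *m V) * frob XP ^+ 2.
Proof.
case: P_proj => Pt _.
have -> : XP *m ((X^T *m E *m X *m W) *m (X^T *m E^T *m X *m V)^T) *m XP^T
          = XP *m (XP^T *m (E *m (X *m W *m ((X *m V)^T *m (E *m (XP *m XP^T)))))).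
  by rewrite !trmx_mul !trmxK Pt !mulmxA !mulmx_proj_idem.
rewrite !expr2 -!mulrA; apply: frob_mulmx_opl_le.
rewrite -(opnorm_trmx XP); apply: frob_mulmx_opl_le.
rewrite mulrCA; apply: frob_mulmx_opl_le.
rewrite mulrCA; apply: frob_mulmx_le.
rewrite mulrCA -[frob (X *m V)]frob_trmx; apply: frob_mulmx_le.
apply: frob_mulmx_opl_le.
by rewrite -{2}(frob_trmx XP) ler_frobM.
Qed.

Lemma frob_projected_update_le (E : 'M[R]_n) k (WQ WK : 'M[R]_(d, k)) (etaQ etaK s : R) :
  0 <= etaQ -> 0 <= etaK -> 0 < s ->
  frob (s^-1 *: (XP *m P *m ((WQ - etaQ *: (s^-1 *: (X^T *m E *m X *m WK)))
                              *m (WK - etaK *: (s^-1 *: (X^T *m E^T *m X *m WQ)))^T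
                              - WQ *m WK^T) *m P *m XP^T))
  <= opnorm XP ^+ 2 * frob XP * opnorm E / s ^+ 2
       * (etaQ * frob (X *m WK *m WK^T *m P) + etaK * frob (X *m WQ *m WQ^T *m P))
     + etaQ * etaK * opnorm XP ^+ 2 * frob XP ^+ 2 * opnorm E ^+ 2
       * frob (X *m WK) * frob (X *m WQ) / s ^+ 3.
Proof.
move=> etaQ_ge0 etaK_ge0 s_gt0.
have si_ge0 : 0 <= s^-1 by rewrite invr_ge0 ltW.
rewrite proj_sandwich !scalerA mulmx_trmx_perturb.
rewrite !mulmxBr !mulmxBl -!scalemxAr -!scalemxAl.
rewrite frobZ ger0_norm //.
apply: le_trans (ler_wpM2l si_ge0 (le_trans (ler_frobB _ _) (lerD (ler_frobB _ _) (lexx _)))) _.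
rewrite !frobZ !ger0_norm ?mulr_ge0 //.
have cQ_ge0 : 0 <= etaQ / s by rewrite mulr_ge0.
have cK_ge0 : 0 <= etaK / s by rewrite mulr_ge0.
apply: le_trans (ler_wpM2l si_ge0 (lerD (lerD
  (ler_wpM2l (mulr_ge0 cQ_ge0 cK_ge0) (frob_second_order_le E WK WQ))
  (ler_wpM2l cQ_ge0 (frob_first_order_le E WK)))
  (ler_wpM2l cK_ge0 (frob_first_order_trmx_le E WQ)))) _.
rewrite le_eqVlt; apply/orP; left; apply/eqP.
by field; rewrite gt_eqF.
Qed.

End ProjectedAttentionUpdate.

Theorem corollary2 (R : realType) (n d dk : nat)
  (Hn : (0 < n)%N) (Hd : (0 < d)%N) (Hdk : (0 < dk)%N)
  (X : 'M[R]_(n, d)) (WQ WK : 'M[R]_(d, dk)) (E : 'M[R]_n) (P : 'M[R]_d)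
  (HP : orth_proj P) (etaQ etaK lamQ lamK : R)
  (HetaQ : 0 <= etaQ) (HetaK : 0 <= etaK) (HlamQ : 0 <= lamQ) (HlamK : 0 <= lamK)
  (HQ : frob (X *m WQ *m WQ^T *m P) <= lamQ * frob (X *m P) * opnorm WQ ^+ 2)
  (HK : frob (X *m WK *m WK^T *m P) <= lamK * frob (X *m P) * opnorm WK ^+ 2) :
  let sdk := Num.sqrt (dk%:R : R) in
  let B := WQ *m WK^T in
  let XP := X *m P in
  let GQ := sdk^-1 *: (X^T *m E *m X *m WK) in
  let GK := sdk^-1 *: (X^T *m E^T *m X *m WQ) in
  let Bp := (WQ - etaQ *: GQ) *m (WK - etaK *: GK)^T in
  let dZP := sdk^-1 *: (XP *m P *m (Bp - B) *m P *m XP^T) in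
  let R2 := etaQ * etaK * opnorm XP ^+ 2 * frob XP ^+ 2 * opnorm E ^+ 2
            * frob (X *m WK) * frob (X *m WQ) / (dk%:R * sdk) in
  frob dZP <= opnorm XP ^+ 2 * frob XP ^+ 2 * opnorm E / dk%:R
              * (etaQ * lamK * opnorm WK ^+ 2 + etaK * lamQ * opnorm WQ ^+ 2) + R2
  /\
  frob dZP <= frob XP ^+ 4 * opnorm E / dk%:R
              * (etaQ * lamK * opnorm WK ^+ 2 + etaK * lamQ * opnorm WQ ^+ 2) + R2.
Proof.
move=> s B XP GQ GK Bp dZP R2.
have s_gt0 : 0 < s by rewrite sqrtr_gt0 ltr0n.
have dk_sqr : dk%:R = s ^+ 2 by rewrite sqr_sqrtr ?ler0n.
have dZP_le := frob_projected_update_le X HP E WQ WK HetaQ HetaK s_gt0.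
set o := opnorm XP in dZP_le *; set f := frob XP in dZP_le HQ HK *.
set e := opnorm E in dZP_le *.
set C := etaQ * lamK * opnorm WK ^+ 2 + etaK * lamQ * opnorm WQ ^+ 2.
have first_order_le :
  etaQ * frob (X *m WK *m WK^T *m P) + etaK * frob (X *m WQ *m WQ^T *m P) <= f * C.
  rewrite (_ : f * C = etaQ * (lamK * f * opnorm WK ^+ 2) + etaK * (lamQ * f * opnorm WQ ^+ 2));
    last by rewrite /C; ring.
  exact: lerD (ler_wpM2l HetaQ HK) (ler_wpM2l HetaK HQ).
have bound : frob dZP <= o ^+ 2 * f ^+ 2 * e / dk%:R * C + R2.
  apply: le_trans dZP_le _; rewrite /R2 dk_sqr -exprSr lerD2r.
  rewrite (_ : o ^+ 2 * f ^+ 2 * e / s ^+ 2 * C = o ^+ 2 * f * e / s ^+ 2 * (f * C)); last by ring.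
  by apply: ler_wpM2l first_order_le; rewrite !mulr_ge0 ?invr_ge0 ?exprn_ge0 ?opnorm_ge0 ?frob_ge0 ?ltW.
have o_le_f : o ^+ 2 <= f ^+ 2.
  by apply: lerXn2r; rewrite ?nnegrE ?opnorm_ge0 ?frob_ge0 ?opnorm_le_frob.
have C_ge0 : 0 <= C by rewrite addr_ge0 ?mulr_ge0 ?exprn_ge0 ?opnorm_ge0.
split => //; apply: le_trans bound _; rewrite lerD2r.
apply/ler_wpM2r/ler_wpM2r/ler_wpM2r => //; rewrite ?invr_ge0 ?ler0n ?opnorm_ge0 //.
by rewrite (_ : 4 = 2 + 2)%N // exprD ler_wpM2r ?exprn_ge0 ?frob_ge0.
Qed.
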